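(* Let $n\ge1$. For every function $f(t)=\sum_{j=1}^na_je^{\lambda_jt}$ with $a_j,\lambda_j\in\mathbb{C}$ and $\mathrm{Re}(\lambda_j)<0$ for all $j$, $$\|f'\|_{L_2[0,\infty)} \le \left(\frac12+\max_{1\le j\le n}\left|\lambda_j+\frac12\right| + 2\left(\sum_{j=1}^n\mathrm{Re}(\lambda_j)\sum_{k=j+1}^n\mathrm{Re}(\lambda_k)\right)^{1/2}\right)\|f\|_{L_2[0,\infty)}.$$
   Context: $\|g\|_{L_2[0,\infty)}:=(\int_0^\infty|g(t)|^2dt)^{1/2}$. *)

From Stdlib Require Import Reals.
Open Scope R_scope.

Fixpoint rsum (n : nat) (g : nat -> R) : R :=
  match n with O => 0 | S m => rsum m g + g m end.

(* rmax n g = max (g 0, ..., g (n-1)), with value 0 for n = 0 *)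
Fixpoint rmax (n : nat) (g : nat -> R) : R :=
  match n with O => 0 | S O => g O | S m => Rmax (rmax m g) (g m) end.

Definition cmod (x y : R) : R := sqrt (x * x + y * y).

(* f(t) = sum_{j<n} a_j e^{lambda_j t}, a_j = ar j + i ai j,
   lambda_j = lr j + i li j.  Real and imaginary parts: *)
Definition expsum_re (n : nat) (ar ai lr li : nat -> R) (t : R) : R :=
  rsum n (fun j => exp (lr j * t) * (ar j * cos (li j * t) - ai j * sin (li j * t))).
Definition expsum_im (n : nat) (ar ai lr li : nat -> R) (t : R) : R :=
  rsum n (fun j => exp (lr j * t) * (ar j * sin (li j * t) + ai j * cos (li j * t))).

Definition improper_int_0_inf (g : R -> R) (I : R) : Prop :=
  (forall T, 0 <= T -> inhabited (Riemann_integrable g 0 T)) /\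
  (forall eps, eps > 0 -> exists M, forall T (pr : Riemann_integrable g 0 T),
       M <= T -> Rabs (RiemannInt pr - I) < eps).

Definition L2norm_0_inf (hr hi : R -> R) (N : R) : Prop :=
  exists I, improper_int_0_inf (fun t => hr t * hr t + hi t * hi t) I /\ N = sqrt I.

From Stdlib Require Import Reals Lra Lia Psatz FunctionalExtensionality.
From Coquelicot Require Import Coquelicot.
Open Scope R_scope.

(* The squared L_2 norm of f = sum_j a_j e^(lam_j t) is the Hermitian
   form Q(a, a) with Q(a, b) = sum_(j,k) a_j conj(b_k) / (-(lam_j + conj lam_k)), and f'
   has coefficients lam_j a_j.  Integrating (f conj g)' gives
   Q(D a, b) + Q(a, D b) = - f(0) conj g(0).  Run Gram-Schmidt for Q on the spans of
   the first k exponentials: in the resulting orthogonal basis D is triangular with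
   diagonal lam_k, the new basis vector phi_k satisfies |phi_k(0)|^2 = -2 Re lam_k ||phi_k||^2,
   and the identity bounds the off-diagonal column of phi_k through |f(0)|^2 <=
   (sum_(j<k) -2 Re lam_j) ||f||^2 on the k-th span.  Summing the columns (Cauchy-Schwarz)
   bounds the strictly triangular part by 2 (sum_(j<k) Re lam_j Re lam_k)^(1/2), and the
   diagonal by max |lam_j| <= 1/2 + max |lam_j + 1/2|. *)

Lemma rsum_ext n (f g : nat -> R) :
  (forall j, (j < n)%nat -> f j = g j) -> rsum n f = rsum n g.
Proof.
  induction n as [|n IH]; intros H; simpl; auto.
  rewrite IH by (intros; apply H; lia). rewrite H by lia; reflexivity.
Qed.

Lemma rsum_plus n (f g : nat -> R) :
  rsum n (fun j => f j + g j) = rsum n f + rsum n g.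
Proof. induction n as [|n IH]; simpl; [ring | rewrite IH; ring]. Qed.

Lemma rsum_scal n c (f : nat -> R) : c * rsum n f = rsum n (fun j => c * f j).
Proof. induction n as [|n IH]; simpl; [ring | rewrite <- IH; ring]. Qed.

Lemma rsum_opp n (f : nat -> R) : - rsum n f = rsum n (fun j => - f j).
Proof. induction n as [|n IH]; simpl; [ring | rewrite <- IH; ring]. Qed.

Lemma rsum_zero n (f : nat -> R) : (forall j, (j < n)%nat -> f j = 0) -> rsum n f = 0.
Proof.
  induction n as [|n IH]; intros H; simpl; auto.
  rewrite IH by (intros; apply H; lia). rewrite H by lia; ring.
Qed.

Lemma rsum_mult n (f g : nat -> R) :
  rsum n f * rsum n g = rsum n (fun j => rsum n (fun k => f j * g k)).
Proof.
  rewrite Rmult_comm, rsum_scal; apply rsum_ext; intros j _.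
  rewrite Rmult_comm, rsum_scal; reflexivity.
Qed.

Lemma rsum_nonneg n (f : nat -> R) : (forall j, (j < n)%nat -> 0 <= f j) -> 0 <= rsum n f.
Proof.
  induction n as [|n IH]; intros H; simpl; [lra|].
  assert (0 <= f n) by (apply H; lia).
  assert (0 <= rsum n f) by (apply IH; intros; apply H; lia). lra.
Qed.

Lemma rsum_upper_triangle n (x : nat -> R) :
  rsum n (fun j => x j * rsum n (fun k => if Nat.ltb j k then x k else 0))
  = rsum n (fun k => x k * rsum k x).
Proof.
  induction n as [|n IH]; [reflexivity|]. simpl. rewrite <- IH.
  rewrite (rsum_ext n _
    (fun j => x j * rsum n (fun k => if Nat.ltb j k then x k else 0) + x n * x j)).
  2:{ intros j hj. replace (Nat.ltb j n) with true by (symmetry; apply Nat.ltb_lt; auto).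
      ring. }
  rewrite rsum_plus, <- rsum_scal, Nat.ltb_irrefl.
  rewrite (rsum_zero n (fun k => if Nat.ltb n k then x k else 0)).
  - ring.
  - intros k hk. replace (Nat.ltb n k) with false by (symmetry; apply Nat.ltb_ge; lia).
    reflexivity.
Qed.

Lemma rmax_ge n (g : nat -> R) j : (j < n)%nat -> g j <= rmax n g.
Proof.
  induction n as [|[|n] IH]; intros hj; [lia| |].
  - replace j with 0%nat by lia. simpl; lra.
  - change (rmax (S (S n)) g) with (Rmax (rmax (S n) g) (g (S n))).
    destruct (Nat.eq_dec j (S n)) as [->|ne]; [apply Rmax_r|].
    eapply Rle_trans; [apply IH; lia | apply Rmax_l].
Qed.

Fixpoint csum (n : nat) (g : nat -> C) : C :=
  match n with O => 0%C | S m => (csum m g + g m)%C end.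

Lemma csum_ext n (f g : nat -> C) :
  (forall j, (j < n)%nat -> f j = g j) -> csum n f = csum n g.
Proof.
  induction n as [|n IH]; intros H; simpl; auto.
  rewrite IH by (intros; apply H; lia). rewrite H by lia; reflexivity.
Qed.

Lemma csum_plus n (f g : nat -> C) :
  csum n (fun j => f j + g j)%C = (csum n f + csum n g)%C.
Proof. induction n as [|n IH]; simpl; [ring | rewrite IH; ring]. Qed.

Lemma csum_scal_l n (c : C) (f : nat -> C) : (c * csum n f)%C = csum n (fun j => c * f j)%C.
Proof. induction n as [|n IH]; simpl; [ring | rewrite <- IH; ring]. Qed.

Lemma csum_scal_r n (c : C) (f : nat -> C) : (csum n f * c)%C = csum n (fun j => f j * c)%C.
Proof. induction n as [|n IH]; simpl; [ring | rewrite <- IH; ring]. Qed.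

Lemma csum_conj n (f : nat -> C) : Cconj (csum n f) = csum n (fun j => Cconj (f j)).
Proof.
  induction n as [|n IH]; simpl.
  - apply injective_projections; simpl; lra.
  - rewrite Cplus_conj, IH; reflexivity.
Qed.

Lemma csum_zero n (f : nat -> C) : (forall j, (j < n)%nat -> f j = 0%C) -> csum n f = 0%C.
Proof.
  induction n as [|n IH]; intros H; simpl; auto.
  rewrite IH by (intros; apply H; lia). rewrite H by lia; ring.
Qed.

Lemma csum_re n (f : nat -> C) : Re (csum n f) = rsum n (fun j => Re (f j)).
Proof. induction n as [|n IH]; simpl; [reflexivity | rewrite <- IH; reflexivity]. Qed.

Lemma csum_swap n m (f : nat -> nat -> C) :
  csum n (fun j => csum m (fun k => f j k)) = csum m (fun k => csum n (fun j => f j k)).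
Proof.
  induction n as [|n IH]; simpl.
  - symmetry; apply csum_zero; auto.
  - rewrite IH, <- csum_plus; reflexivity.
Qed.
Lemma discriminant_le (A B C : R) :
  0 <= C -> (forall t, 0 <= A + 2 * B * t + C * t * t) -> B * B <= A * C.
Proof.
  intros hC H.
  destruct (Req_dec C 0) as [C0|C0].
  - subst C. destruct (Req_dec B 0) as [->|B0]; [specialize (H 0); nra|].
    specialize (H (- (A + 1) / (2 * B))).
    replace (A + 2 * B * (- (A + 1) / (2 * B)) + 0 * (- (A + 1) / (2 * B)) * (- (A + 1) / (2 * B)))
      with (-1) in H by (field; auto). lra.
  - specialize (H (- B / C)).
    replace (A + 2 * B * (- B / C) + C * (- B / C) * (- B / C)) with ((A * C - B * B) / C) in H
      by (field; auto).
    assert (hC' : 0 < C) by lra.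
    apply Rmult_le_compat_r with (r := C) in H; [|lra].
    unfold Rdiv in H. rewrite Rmult_0_l, Rmult_assoc, Rinv_l in H by lra. lra.
Qed.

Lemma cauchy_schwarz2 X Y a b c d :
  0 <= X -> 0 <= Y -> 0 <= a -> 0 <= b -> 0 <= c -> 0 <= d ->
  X * X <= a * b -> Y * Y <= c * d -> (X + Y) * (X + Y) <= (a + c) * (b + d).
Proof.
  intros. assert (XY : X * Y <= (a * d + b * c) / 2).
  { apply Rsqr_incr_0_var; unfold Rsqr; [|nra].
    assert (X * X * (Y * Y) <= a * b * (c * d)) by (apply Rmult_le_compat; nra).
    assert (0 <= (a * d - b * c) * (a * d - b * c)) by apply Rle_0_sqr.
    nra. }
  nra.
Qed.

(** * The Gram form of exponential sums *)

Definition vadd (a b : nat -> C) (j : nat) : C := (a j + b j)%C.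
Definition vsub (a b : nat -> C) (j : nat) : C := (a j - b j)%C.
Definition vscale (c : C) (a : nat -> C) (j : nat) : C := (c * a j)%C.

Section GramForm.

Variables (n : nat) (lam : nat -> C).
Hypothesis lam_neg : forall j, (j < n)%nat -> Re (lam j) < 0.

(* [gram a b] is the L_2[0,oo) inner product of sum_j a_j e^(lam_j t) and
   sum_k b_k e^(lam_k t): int_0^oo e^((lam_j + conj lam_k) t) dt = - 1 / (lam_j + conj lam_k). *)
Definition gram (a b : nat -> C) : C :=
  csum n (fun j => csum n (fun k => a j * Cconj (b k) * - / (lam j + Cconj (lam k))))%C.

Definition sqnorm (a : nat -> C) : R := Re (gram a a).

Definition dmul (a : nat -> C) (j : nat) : C := (lam j * a j)%C.

Definition supp_lt (k : nat) (a : nat -> C) : Prop := forall j, (k <= j < n)%nat -> a j = 0%C.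

Lemma lam_add_conj_neq0 j k :
  (j < n)%nat -> (k < n)%nat -> (lam j + Cconj (lam k))%C <> 0%C.
Proof.
  intros hj hk E. apply (f_equal Re) in E.
  generalize (lam_neg j hj) (lam_neg k hk). unfold Re in *; simpl in *. lra.
Qed.

Lemma gram_plus_l a a' b : gram (vadd a a') b = (gram a b + gram a' b)%C.
Proof.
  unfold gram, vadd. rewrite <- csum_plus. apply csum_ext; intros.
  rewrite <- csum_plus. apply csum_ext; intros. ring.
Qed.

Lemma gram_plus_r a b b' : gram a (vadd b b') = (gram a b + gram a b')%C.
Proof.
  unfold gram, vadd. rewrite <- csum_plus. apply csum_ext; intros.
  rewrite <- csum_plus. apply csum_ext; intros. rewrite Cplus_conj. ring.
Qed.

Lemma gram_scale_l c a b : gram (vscale c a) b = (c * gram a b)%C.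
Proof.
  unfold gram, vscale. rewrite csum_scal_l. apply csum_ext; intros.
  rewrite csum_scal_l. apply csum_ext; intros. ring.
Qed.

Lemma gram_scale_r c a b : gram a (vscale c b) = (Cconj c * gram a b)%C.
Proof.
  unfold gram, vscale. rewrite csum_scal_l. apply csum_ext; intros.
  rewrite csum_scal_l. apply csum_ext; intros. rewrite Cmult_conj. ring.
Qed.

Lemma gram_sub_l a a' b : gram (vsub a a') b = (gram a b - gram a' b)%C.
Proof.
  replace (vsub a a') with (vadd a (vscale (-1) a'))
    by (extensionality j; unfold vsub, vadd, vscale; ring).
  rewrite gram_plus_l, gram_scale_l. ring.
Qed.

Lemma gram_conj a b : Cconj (gram a b) = gram b a.
Proof.
  unfold gram. rewrite csum_conj, csum_swap. apply csum_ext; intros k hk.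
  rewrite csum_conj. apply csum_ext; intros j hj.
  rewrite !Cmult_conj, Copp_conj, Cinv_conj, Cplus_conj, !Cconj_conj
    by (apply lam_add_conj_neq0; auto).
  replace (Cconj (lam k) + lam j)%C with (lam j + Cconj (lam k))%C by ring. ring.
Qed.

Lemma gram_supp_lt0 a b : supp_lt 0 a -> gram a b = 0%C.
Proof.
  intros H. apply csum_zero; intros j hj. apply csum_zero; intros k hk.
  rewrite H by lia. ring.
Qed.

(* The Gram-form version of [int_0^oo (f conj g)' = - f(0) conj g(0)]. *)
Lemma gram_dmul a b :
  (gram (dmul a) b + gram a (dmul b))%C = (- (csum n a * Cconj (csum n b)))%C.
Proof.
  unfold gram, dmul. rewrite <- csum_plus, csum_conj, csum_scal_r.
  replace (- _)%C with ((-1) * csum n (fun j => a j * csum n (fun k => Cconj (b k))))%C by ring.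
  rewrite csum_scal_l. apply csum_ext; intros j hj.
  rewrite <- csum_plus, csum_scal_l, csum_scal_l. apply csum_ext; intros k hk.
  rewrite Cmult_conj. field. apply lam_add_conj_neq0; auto.
Qed.

Lemma gram_diag a : gram a a = RtoC (sqnorm a).
Proof.
  assert (E := gram_conj a a). apply (f_equal Im) in E. rewrite im_conj in E.
  unfold sqnorm. apply injective_projections; simpl; [reflexivity | unfold Im in E; lra].
Qed.

Lemma sqnorm_plus a b :
  sqnorm (vadd a b) = sqnorm a + sqnorm b + 2 * Re (gram a b).
Proof.
  unfold sqnorm. rewrite gram_plus_l, !gram_plus_r, <- (gram_conj a b).
  unfold Re; simpl. ring.
Qed.

Lemma sqnorm_scale c a : sqnorm (vscale c a) = Cmod c ^ 2 * sqnorm a.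
Proof.
  unfold sqnorm at 1. rewrite gram_scale_l, gram_scale_r, Cmult_assoc, <- Cmod2_conj, gram_diag.
  unfold Re; simpl. ring.
Qed.

Lemma sqnorm_orth a b : gram a b = 0%C -> sqnorm (vadd a b) = sqnorm a + sqnorm b.
Proof. intros E. rewrite sqnorm_plus, E. simpl. ring. Qed.

Hypothesis sqnorm_nonneg : forall a, 0 <= sqnorm a.

Lemma re_gram_sq_le a b : Re (gram a b) * Re (gram a b) <= sqnorm a * sqnorm b.
Proof.
  apply discriminant_le; [apply sqnorm_nonneg|]. intros t.
  generalize (sqnorm_nonneg (vadd a (vscale (RtoC t) b))).
  rewrite sqnorm_plus, sqnorm_scale, gram_scale_r, Cmod_R.
  replace (Rabs t ^ 2) with (t * t) by (rewrite pow2_abs; ring).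
  unfold Re; simpl. nra.
Qed.

Lemma gram_cauchy_schwarz a b : Cmod (gram a b) ^ 2 <= sqnorm a * sqnorm b.
Proof.
  set (z := gram a b).
  assert (Hz := re_gram_sq_le (vscale (Cconj z) a) b).
  rewrite gram_scale_l, sqnorm_scale, Cmod_conj in Hz. fold z in Hz.
  replace (Re (Cconj z * z)) with (Cmod z ^ 2) in Hz
    by (rewrite Cmod2_alt; unfold Re, Im; simpl; ring).
  assert (0 <= sqnorm a) by apply sqnorm_nonneg.
  assert (0 <= sqnorm b) by apply sqnorm_nonneg.
  destruct (Req_dec (Cmod z) 0) as [->|nz]; [simpl; nra|].
  assert (0 < Cmod z ^ 2) by (generalize (Cmod_ge_0 z); simpl; nra).
  nra.
Qed.

Lemma gram_null_r a b : sqnorm b = 0 -> gram a b = 0%C.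
Proof.
  intros Nb. apply Cmod_eq_0.
  generalize (gram_cauchy_schwarz a b) (Cmod_ge_0 (gram a b)). rewrite Nb. simpl. nra.
Qed.

(* [phi] may be null: the form is only semidefinite when exponents repeat. *)
Lemma gram_orth_component x phi : exists c, gram (vsub x (vscale c phi)) phi = 0%C.
Proof.
  destruct (Req_dec (sqnorm phi) 0) as [N0|N0].
  - exists 0%C. rewrite gram_null_r; auto.
  - exists (gram x phi / RtoC (sqnorm phi))%C.
    rewrite gram_sub_l, gram_scale_l, gram_diag. field.
    intros E; apply RtoC_inj in E; auto.
Qed.

Lemma sqnorm_triangle a b A B :
  0 <= A -> 0 <= B -> sqnorm a <= A * A -> sqnorm b <= B * B ->
  sqnorm (vadd a b) <= (A + B) * (A + B).
Proof.
  intros hA hB ha hb. rewrite sqnorm_plus.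
  assert (Hre := re_gram_sq_le a b).
  assert (0 <= sqnorm a) by apply sqnorm_nonneg.
  assert (0 <= sqnorm b) by apply sqnorm_nonneg.
  assert (sqnorm a * sqnorm b <= (A * A) * (B * B)) by (apply Rmult_le_compat; auto).
  assert (Re (gram a b) <= A * B) by (apply Rsqr_incr_0_var; unfold Rsqr; nra).
  nra.
Qed.

Lemma supp_lt_succ k a : supp_lt k a -> supp_lt (S k) a.
Proof. intros H j hj. apply H; lia. Qed.

Lemma supp_lt_add k a b : supp_lt k a -> supp_lt k b -> supp_lt k (vadd a b).
Proof. intros Ha Hb j hj. unfold vadd. rewrite Ha, Hb by auto. ring. Qed.

Lemma supp_lt_sub k a b : supp_lt k a -> supp_lt k b -> supp_lt k (vsub a b).
Proof. intros Ha Hb j hj. unfold vsub. rewrite Ha, Hb by auto. ring. Qed.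

Lemma supp_lt_scale k c a : supp_lt k a -> supp_lt k (vscale c a).
Proof. intros Ha j hj. unfold vscale. rewrite Ha by auto. ring. Qed.

Lemma supp_lt_dmul k a : supp_lt k a -> supp_lt k (dmul a).
Proof. intros Ha j hj. unfold dmul. rewrite Ha by auto. ring. Qed.

Lemma csum_vadd a b : csum n (vadd a b) = (csum n a + csum n b)%C.
Proof. apply csum_plus. Qed.

Lemma csum_vscale c a : csum n (vscale c a) = (c * csum n a)%C.
Proof. unfold vscale. rewrite csum_scal_l. reflexivity. Qed.

Definition kappa (k : nat) : R := rsum k (fun j => -2 * Re (lam j)).
Definition sigma (k : nat) : R := rsum k (fun j => -2 * Re (lam j) * kappa j).

Lemma kappa_nonneg k : (k <= n)%nat -> 0 <= kappa k.
Proof.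
  intros hk. apply rsum_nonneg; intros j hj.
  generalize (lam_neg j ltac:(lia)). lra.
Qed.

Lemma sigma_nonneg k : (k <= n)%nat -> 0 <= sigma k.
Proof.
  intros hk. apply rsum_nonneg; intros j hj.
  generalize (lam_neg j ltac:(lia)) (kappa_nonneg j ltac:(lia)). nra.
Qed.

(** * Gram-Schmidt and the triangular form of differentiation *)

Section TriangularForm.

Variable M : R.
Hypothesis M_nonneg : 0 <= M.
Hypothesis lam_bound : forall j, (j < n)%nat -> Cmod (lam j) <= M.

Definition has_projection (k : nat) : Prop :=
  forall x, exists p, supp_lt k p /\
    forall psi, supp_lt k psi -> gram (vsub x p) psi = 0%C.

Definition eval_bounded (k : nat) : Prop :=
  forall u, supp_lt k u -> Cmod (csum n u) ^ 2 <= kappa k * sqnorm u.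

(* [x] plays the role of the diagonal part of [dmul u] in a Q-orthogonal basis. *)
Definition triangular_split (k : nat) : Prop :=
  forall u, supp_lt k u -> exists x, supp_lt k x /\
    sqnorm x <= M * M * sqnorm u /\ sqnorm (vsub (dmul u) x) <= sigma k * sqnorm u.

Lemma invariants_0 : has_projection 0 /\ eval_bounded 0 /\ triangular_split 0.
Proof.
  assert (N0 : forall u, supp_lt 0 u -> sqnorm u = 0).
  { intros u hu. unfold sqnorm. rewrite gram_supp_lt0 by auto. reflexivity. }
  split; [|split].
  - intros x. exists (fun _ => 0%C). split; [intros j hj; reflexivity|].
    intros psi hpsi. rewrite <- gram_conj, gram_supp_lt0 by auto.
    apply injective_projections; simpl; lra.
  - intros u hu. rewrite csum_zero by (intros; apply hu; lia).
    rewrite Cmod_0, N0 by auto. simpl; lra.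
  - intros u hu. exists (fun _ => 0%C). split; [intros j hj; reflexivity|].
    assert (Z : supp_lt 0 (fun _ => 0%C)) by (intros j hj; reflexivity).
    rewrite (N0 u), (N0 _ Z), N0 by (auto; apply supp_lt_sub; auto; apply supp_lt_dmul; auto).
    lra.
Qed.

Section GramSchmidtStep.

Variables (k : nat) (phi : nat -> C).
Hypothesis k_lt_n : (k < n)%nat.
Hypothesis phi_orth : forall psi, supp_lt k psi -> gram phi psi = 0%C.
Hypothesis phi_supp : supp_lt (S k) phi.
Hypothesis phi_k : phi k = 1%C.

Lemma orth_phi psi : supp_lt k psi -> gram psi phi = 0%C.
Proof.
  intros hpsi. rewrite <- gram_conj, phi_orth by auto.
  apply injective_projections; simpl; lra.
Qed.

Lemma supp_lt_succ_decomp u :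
  supp_lt (S k) u -> exists w c, supp_lt k w /\ u = vadd w (vscale c phi).
Proof.
  intros hu. exists (vsub u (vscale (u k) phi)), (u k). split.
  - intros j hj. unfold vsub, vscale.
    destruct (Nat.eq_dec j k) as [->|ne]; [rewrite phi_k; ring|].
    rewrite hu, phi_supp by lia. ring.
  - extensionality j. unfold vadd, vsub, vscale. ring.
Qed.

Lemma sqnorm_decomp w c :
  supp_lt k w -> sqnorm (vadd w (vscale c phi)) = sqnorm w + Cmod c ^ 2 * sqnorm phi.
Proof.
  intros hw. rewrite sqnorm_orth, sqnorm_scale; auto.
  rewrite gram_scale_r, orth_phi by auto. ring.
Qed.

Definition phi_rem : nat -> C := vsub (dmul phi) (vscale (lam k) phi).

Lemma supp_lt_phi_rem : supp_lt k phi_rem.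
Proof.
  intros j hj. unfold phi_rem, vsub, vscale, dmul.
  destruct (Nat.eq_dec j k) as [->|ne]; [ring|]. rewrite phi_supp by lia. ring.
Qed.

Lemma gram_dmul_phi psi :
  supp_lt k psi -> gram (dmul phi) psi = (- (csum n phi * Cconj (csum n psi)))%C.
Proof.
  intros hpsi. rewrite <- gram_dmul, (phi_orth (dmul psi)) by (apply supp_lt_dmul; auto).
  ring.
Qed.

Lemma eval_phi : Cmod (csum n phi) ^ 2 = -2 * Re (lam k) * sqnorm phi.
Proof.
  assert (E1 : gram (dmul phi) phi = (lam k * RtoC (sqnorm phi))%C).
  { replace (dmul phi) with (vadd (vscale (lam k) phi) phi_rem)
      by (extensionality j; unfold phi_rem, vadd, vsub, vscale, dmul; ring).
    rewrite gram_plus_l, gram_scale_l, (orth_phi phi_rem), gram_diag by apply supp_lt_phi_rem.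
    ring. }
  generalize (gram_dmul phi phi). rewrite <- (gram_conj (dmul phi) phi), E1.
  intros E. apply (f_equal Re) in E. rewrite Cmod2_alt.
  destruct (lam k), (csum n phi). unfold Re, Im in *; simpl in *. lra.
Qed.

Lemma has_projection_succ : has_projection k -> has_projection (S k).
Proof.
  intros Hproj x. destruct (Hproj x) as [p [hp hxp]].
  destruct (gram_orth_component (vsub x p) phi) as [c hc].
  exists (vadd p (vscale c phi)).
  split; [apply supp_lt_add; [apply supp_lt_succ | apply supp_lt_scale]; auto|].
  intros psi hpsi. destruct (supp_lt_succ_decomp psi hpsi) as [w [d [hw ->]]].
  replace (vsub x (vadd p (vscale c phi))) with (vsub (vsub x p) (vscale c phi))
    by (extensionality j; unfold vsub, vadd, vscale; ring).
  rewrite gram_plus_r, gram_scale_r, hc, gram_sub_l, gram_scale_l, hxp, phi_orth by auto.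
  ring.
Qed.

Lemma eval_bounded_succ : eval_bounded k -> eval_bounded (S k).
Proof.
  intros Hev u hu. destruct (supp_lt_succ_decomp u hu) as [w [c [hw ->]]].
  rewrite csum_vadd, csum_vscale, sqnorm_decomp by auto.
  assert (T := Cmod_triangle (csum n w) (c * csum n phi)%C). rewrite Cmod_mult in T.
  assert (Hw := Hev w hw). assert (Hphi := eval_phi).
  assert (0 <= sqnorm w) by apply sqnorm_nonneg.
  assert (0 <= sqnorm phi) by apply sqnorm_nonneg.
  assert (0 <= kappa k) by (apply kappa_nonneg; lia).
  assert (Re (lam k) < 0) by auto.
  generalize (Cmod_ge_0 (csum n w)) (Cmod_ge_0 c) (Cmod_ge_0 (csum n phi))
    (Cmod_ge_0 (csum n w + c * csum n phi)%C). intros.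
  assert (CS := cauchy_schwarz2 (Cmod (csum n w)) (Cmod c * Cmod (csum n phi))
    (kappa k) (sqnorm w) (-2 * Re (lam k)) (Cmod c ^ 2 * sqnorm phi)).
  change (kappa (S k)) with (kappa k + -2 * Re (lam k)). simpl in *.
  apply Rle_trans with ((Cmod (csum n w) + Cmod c * Cmod (csum n phi))
                        * (Cmod (csum n w) + Cmod c * Cmod (csum n phi))); nra.
Qed.

(* [gram phi_rem phi_rem = - phi(0) conj phi_rem(0)], and both values at 0 are
   controlled by [eval_phi] and [eval_bounded k]. *)
Lemma sqnorm_phi_rem_le :
  eval_bounded k -> sqnorm phi_rem <= -2 * Re (lam k) * sqnorm phi * kappa k.
Proof.
  intros Hev. set (r := phi_rem).
  assert (Qrr : gram r r = (- (csum n phi * Cconj (csum n r)))%C).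
  { unfold r at 1, phi_rem.
    rewrite gram_sub_l, gram_scale_l, gram_dmul_phi, phi_orth by apply supp_lt_phi_rem.
    ring. }
  assert (B : sqnorm r <= Cmod (csum n phi) * Cmod (csum n r)).
  { unfold sqnorm. rewrite Qrr, <- (Cmod_conj (csum n r)), <- Cmod_mult, <- Cmod_opp.
    generalize (re_le_Cmod (- (csum n phi * Cconj (csum n r)))%C).
    unfold Rabs. destruct Rcase_abs; lra. }
  assert (Hr := Hev r supp_lt_phi_rem). assert (Hphi := eval_phi).
  assert (0 <= sqnorm r) by apply sqnorm_nonneg.
  assert (0 <= sqnorm phi) by apply sqnorm_nonneg.
  assert (0 <= kappa k) by (apply kappa_nonneg; lia).
  generalize (Cmod_ge_0 (csum n phi)) (Cmod_ge_0 (csum n r)). intros.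
  assert (sqnorm r * sqnorm r <= (-2 * Re (lam k) * sqnorm phi) * (kappa k * sqnorm r)).
  { rewrite <- Hphi. simpl in *.
    apply Rle_trans with ((Cmod (csum n phi) * Cmod (csum n r))
                          * (Cmod (csum n phi) * Cmod (csum n r))); nra. }
  assert (Re (lam k) < 0) by auto.
  destruct (Req_dec (sqnorm r) 0) as [->|nz]; [nra|].
  apply Rmult_le_reg_r with (sqnorm r); nra.
Qed.

Lemma triangular_split_succ :
  eval_bounded k -> triangular_split k -> triangular_split (S k).
Proof.
  intros Hev Hsplit u hu. destruct (supp_lt_succ_decomp u hu) as [w [c [hw ->]]].
  destruct (Hsplit w hw) as [x [hx [Hx Hdx]]].
  exists (vadd x (vscale (c * lam k)%C phi)).
  split; [apply supp_lt_add; [apply supp_lt_succ | apply supp_lt_scale]; auto|].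
  rewrite (sqnorm_decomp w c) by auto.
  assert (0 <= sqnorm w) by apply sqnorm_nonneg.
  assert (0 <= sqnorm phi) by apply sqnorm_nonneg.
  assert (Re (lam k) < 0) by auto.
  assert (0 <= kappa k) by (apply kappa_nonneg; lia).
  assert (0 <= sigma k) by (apply sigma_nonneg; lia).
  assert (0 <= Cmod c ^ 2) by (simpl; generalize (Cmod_ge_0 c); nra).
  split.
  - rewrite (sqnorm_decomp x), Cmod_mult by auto.
    assert (Cmod (lam k) ^ 2 <= M * M)
      by (generalize (lam_bound k k_lt_n) (Cmod_ge_0 (lam k)); simpl; nra).
    replace ((Cmod c * Cmod (lam k)) ^ 2) with (Cmod c ^ 2 * Cmod (lam k) ^ 2) by ring.
    assert (0 <= Cmod c ^ 2 * sqnorm phi) by nra.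
    nra.
  - replace (vsub (dmul (vadd w (vscale c phi))) (vadd x (vscale (c * lam k)%C phi)))
      with (vadd (vsub (dmul w) x) (vscale c phi_rem))
      by (extensionality j; unfold phi_rem, vadd, vsub, vscale, dmul; ring).
    assert (Hr := sqnorm_phi_rem_le Hev).
    assert (0 <= -2 * Re (lam k) * kappa k * (Cmod c ^ 2 * sqnorm phi))
      by (apply Rmult_le_pos; nra).
    apply Rle_trans with
      ((sqrt (sigma k * sqnorm w) + sqrt (-2 * Re (lam k) * kappa k * (Cmod c ^ 2 * sqnorm phi)))
     * (sqrt (sigma k * sqnorm w) + sqrt (-2 * Re (lam k) * kappa k * (Cmod c ^ 2 * sqnorm phi)))).
    + apply sqnorm_triangle; try apply sqrt_pos; rewrite sqrt_sqrt; try nra.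
      rewrite sqnorm_scale. nra.
    + change (sigma (S k)) with (sigma k + -2 * Re (lam k) * kappa k).
      apply cauchy_schwarz2; try apply sqrt_pos; try rewrite sqrt_sqrt; nra.
Qed.

End GramSchmidtStep.

Lemma invariants_succ k :
  (k < n)%nat -> has_projection k -> eval_bounded k -> triangular_split k ->
  has_projection (S k) /\ eval_bounded (S k) /\ triangular_split (S k).
Proof.
  intros hk Hproj Hev Hsplit.
  set (e := fun j => if Nat.eqb j k then 1%C else 0%C).
  destruct (Hproj e) as [p [hp Horth]].
  assert (Hsupp : supp_lt (S k) (vsub e p)).
  { intros j hj. unfold vsub, e.
    replace (Nat.eqb j k) with false by (symmetry; apply Nat.eqb_neq; lia).
    rewrite hp by lia. ring. }
  assert (Hk : vsub e p k = 1%C).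
  { unfold vsub, e. rewrite Nat.eqb_refl, hp by lia. ring. }
  split; [|split].
  - apply (has_projection_succ k (vsub e p)); auto.
  - apply (eval_bounded_succ k (vsub e p)); auto.
  - apply (triangular_split_succ k (vsub e p)); auto.
Qed.

Lemma triangular_split_n : triangular_split n.
Proof.
  assert (H : forall k, (k <= n)%nat ->
            has_projection k /\ eval_bounded k /\ triangular_split k).
  { induction k as [|k IH]; intros hk; [apply invariants_0|].
    destruct IH as [? [? ?]]; [lia|]. apply invariants_succ; auto. }
  apply H; lia.
Qed.

Lemma sqnorm_dmul_le a :
  sqnorm (dmul a) <= (M + sqrt (sigma n)) * (M + sqrt (sigma n)) * sqnorm a.
Proof.
  destruct (triangular_split_n a) as [x [_ [Hx Hdx]]]; [intros j hj; lia|].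
  replace (dmul a) with (vadd x (vsub (dmul a) x))
    by (extensionality j; unfold vadd, vsub; ring).
  assert (0 <= sqnorm a) by apply sqnorm_nonneg.
  assert (0 <= sigma n) by (apply sigma_nonneg; lia).
  set (s := sqrt (sqnorm a)).
  assert (Hs : s * s = sqnorm a) by (apply sqrt_sqrt; auto).
  assert (Hsig := sqrt_sqrt (sigma n) ltac:(auto)).
  apply Rle_trans with ((M * s + sqrt (sigma n) * s) * (M * s + sqrt (sigma n) * s)).
  - apply sqnorm_triangle; try (apply Rmult_le_pos; auto; apply sqrt_pos).
    + replace (M * s * (M * s)) with (M * M * (s * s)) by ring. rewrite Hs; auto.
    + replace (sqrt (sigma n) * s * (sqrt (sigma n) * s))
        with (sqrt (sigma n) * sqrt (sigma n) * (s * s)) by ring.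
      rewrite Hs, Hsig; auto.
  - right. rewrite <- Hs. ring.
Qed.

End TriangularForm.

End GramForm.

(** * Integrals of exponential sums *)

Lemma rsum_is_derive n (f df : nat -> R -> R) t :
  (forall j, (j < n)%nat -> is_derive (f j) t (df j t)) ->
  is_derive (fun s => rsum n (fun j => f j s)) t (rsum n (fun j => df j t)).
Proof.
  induction n as [|n IH]; intros H; simpl.
  - apply is_derive_Reals, derivable_pt_lim_const.
  - apply (is_derive_plus (fun s => rsum n (fun j => f j s)) (f n));
      [apply IH; intros; apply H | apply H]; lia.
Qed.

Lemma rsum_continuous n (f : nat -> R -> R) t :
  (forall j, (j < n)%nat -> continuous (f j) t) ->
  continuous (fun s => rsum n (fun j => f j s)) t.
Proof.
  induction n as [|n IH]; intros H; simpl.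
  - apply continuous_const.
  - apply (continuous_plus (fun s => rsum n (fun j => f j s)) (f n));
      [apply IH; intros; apply H | apply H]; lia.
Qed.

Definition vanishes_at_pinfty (f : R -> R) : Prop :=
  forall eps, eps > 0 -> exists M, forall T, M <= T -> Rabs (f T) < eps.

Lemma vanishes_at_pinfty_plus f g :
  vanishes_at_pinfty f -> vanishes_at_pinfty g -> vanishes_at_pinfty (fun t => f t + g t).
Proof.
  intros hf hg eps he.
  destruct (hf (eps / 2)) as [M1 h1]; [lra|]. destruct (hg (eps / 2)) as [M2 h2]; [lra|].
  exists (Rmax M1 M2). intros T hT.
  assert (Rabs (f T) < eps / 2) by (apply h1; eapply Rle_trans; [apply Rmax_l | exact hT]).
  assert (Rabs (g T) < eps / 2) by (apply h2; eapply Rle_trans; [apply Rmax_r | exact hT]).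
  eapply Rle_lt_trans; [apply Rabs_triang | lra].
Qed.

Lemma vanishes_at_pinfty_rsum n (f : nat -> R -> R) :
  (forall j, (j < n)%nat -> vanishes_at_pinfty (f j)) ->
  vanishes_at_pinfty (fun t => rsum n (fun j => f j t)).
Proof.
  induction n as [|n IH]; intros H; simpl.
  - intros eps he. exists 0. intros. rewrite Rabs_R0. lra.
  - apply (vanishes_at_pinfty_plus (fun t => rsum n (fun j => f j t)) (f n));
      [apply IH; intros; apply H | apply H]; lia.
Qed.

Definition damped (p q al be t : R) : R :=
  exp (p * t) * (al * cos (q * t) + be * sin (q * t)).

Definition damped_antideriv (p q al be : R) : R -> R :=
  damped p q ((p * al - q * be) / (p * p + q * q)) ((q * al + p * be) / (p * p + q * q)).

Lemma is_derive_damped_antideriv p q al be t :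
  p <> 0 -> is_derive (damped_antideriv p q al be) t (damped p q al be t).
Proof.
  intros hp. unfold damped_antideriv, damped. auto_derive; [exact I|].
  assert (0 < p * p) by (apply Rsqr_pos_lt; auto).
  assert (0 <= q * q) by apply Rle_0_sqr.
  field. lra.
Qed.

Lemma continuous_damped p q al be t : continuous (damped p q al be) t.
Proof.
  apply (ex_derive_continuous (K := R_AbsRing) (V := R_NormedModule)).
  unfold damped. auto_derive. exact I.
Qed.

Lemma vanishes_at_pinfty_damped p q al be : p < 0 -> vanishes_at_pinfty (damped p q al be).
Proof.
  intros hp eps he. set (K := Rabs al + Rabs be + 1).
  assert (hK : 0 < K) by (unfold K; generalize (Rabs_pos al) (Rabs_pos be); lra).
  exists (ln (eps / K) / p). intros T hT.
  assert (Hexp : exp (p * T) <= eps / K).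
  { rewrite <- (exp_ln (eps / K)) by (apply Rdiv_lt_0_compat; lra).
    apply Rmult_le_compat_neg_l with (r := p) in hT; [|lra].
    replace (p * (ln (eps / K) / p)) with (ln (eps / K)) in hT by (field; lra).
    destruct (Rle_lt_or_eq_dec _ _ hT) as [h|h]; [left; apply exp_increasing; lra | right].
    rewrite h; reflexivity. }
  assert (Hosc : Rabs (al * cos (q * T) + be * sin (q * T)) <= Rabs al + Rabs be).
  { eapply Rle_trans; [apply Rabs_triang|]. rewrite !Rabs_mult.
    assert (Rabs (cos (q * T)) <= 1) by apply Rabs_le, COS_bound.
    assert (Rabs (sin (q * T)) <= 1) by apply Rabs_le, SIN_bound.
    generalize (Rabs_pos al) (Rabs_pos be). nra. }
  unfold damped. rewrite Rabs_mult, Rabs_right by (left; apply exp_pos).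
  assert (0 < exp (p * T)) by apply exp_pos.
  apply Rle_lt_trans with (exp (p * T) * (Rabs al + Rabs be)); [apply Rmult_le_compat_l; lra|].
  apply Rlt_le_trans with (exp (p * T) * K); [apply Rmult_lt_compat_l; unfold K; lra|].
  apply Rle_trans with (eps / K * K); [apply Rmult_le_compat_r; lra | right; field; lra].
Qed.

Lemma improper_int_antideriv (F h : R -> R) :
  (forall t, is_derive F t (h t)) -> (forall t, continuous h t) ->
  vanishes_at_pinfty F -> improper_int_0_inf h (- F 0).
Proof.
  intros HF Hh Hlim.
  assert (Hint : forall T, is_RInt h 0 T (F T - F 0))
    by (intros T; apply (is_RInt_derive F h); auto).
  split.
  - intros T _. constructor. apply ex_RInt_Reals_0. eexists; apply Hint.
  - intros eps he. destruct (Hlim eps he) as [M hM]. exists M. intros T pr hT.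
    rewrite <- RInt_Reals, (is_RInt_unique _ _ _ _ (Hint T)).
    replace (F T - F 0 - - F 0) with (F T) by ring. auto.
Qed.

Lemma improper_int_nonneg h I :
  (forall t, 0 <= h t) -> improper_int_0_inf h I -> 0 <= I.
Proof.
  intros Hh [Hi Hl]. destruct (Rle_dec 0 I) as [ok|ko]; auto. exfalso.
  destruct (Hl (- I)) as [M hM]; [lra|].
  destruct (Hi (Rmax M 0) (Rmax_r M 0)) as [pr].
  assert (A := hM (Rmax M 0) pr (Rmax_l M 0)).
  assert (0 <= RiemannInt pr).
  { rewrite <- RInt_Reals. apply RInt_ge_0; [apply Rmax_r | | auto].
    apply ex_RInt_Reals_1; auto. }
  unfold Rabs in A. destruct Rcase_abs in A; lra.
Qed.

Section SquaredModulus.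

Variables (n : nat) (ar ai lr li : nat -> R).
Hypothesis lr_neg : forall j, (j < n)%nat -> lr j < 0.

(* [a_j conj(a_k) e^((lam_j + conj lam_k) t)] has real part
   [damped (lr j + lr k) (li j - li k) (Re (a_j conj a_k)) (- Im (a_j conj a_k)) t]. *)
Definition cross_term (D : R -> R -> R -> R -> R -> R) (j k : nat) : R -> R :=
  D (lr j + lr k) (li j - li k) (ar j * ar k + ai j * ai k) (ar j * ai k - ai j * ar k).

Definition cross_sum (D : R -> R -> R -> R -> R -> R) (t : R) : R :=
  rsum n (fun j => rsum n (fun k => cross_term D j k t)).

Lemma sq_expsum_eq t :
  expsum_re n ar ai lr li t * expsum_re n ar ai lr li t
  + expsum_im n ar ai lr li t * expsum_im n ar ai lr li t = cross_sum damped t.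
Proof.
  unfold expsum_re, expsum_im, cross_sum. rewrite !rsum_mult, <- rsum_plus.
  apply rsum_ext; intros j hj. rewrite <- rsum_plus. apply rsum_ext; intros k hk.
  unfold cross_term, damped.
  replace ((li j - li k) * t) with (li j * t - li k * t) by ring.
  replace ((lr j + lr k) * t) with (lr j * t + lr k * t) by ring.
  rewrite cos_minus, sin_minus, exp_plus. ring.
Qed.

Lemma cross_exponent_neg j k : (j < n)%nat -> (k < n)%nat -> lr j + lr k < 0.
Proof. intros hj hk. generalize (lr_neg j hj) (lr_neg k hk). lra. Qed.

Lemma is_derive_cross_sum t : is_derive (cross_sum damped_antideriv) t (cross_sum damped t).
Proof.
  apply (rsum_is_derive n (fun j s => rsum n (fun k => cross_term damped_antideriv j k s))
                          (fun j s => rsum n (fun k => cross_term damped j k s))).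
  intros j hj.
  apply (rsum_is_derive n (fun k => cross_term damped_antideriv j k) (fun k => cross_term damped j k)).
  intros k hk. apply is_derive_damped_antideriv.
  generalize (cross_exponent_neg j k hj hk). lra.
Qed.

Lemma continuous_cross_sum t : continuous (cross_sum damped) t.
Proof.
  apply (rsum_continuous n (fun j s => rsum n (fun k => cross_term damped j k s))).
  intros j hj. apply (rsum_continuous n (fun k => cross_term damped j k)).
  intros k hk. apply continuous_damped.
Qed.

Lemma vanishes_at_pinfty_cross_sum : vanishes_at_pinfty (cross_sum damped_antideriv).
Proof.
  apply (vanishes_at_pinfty_rsum n (fun j s => rsum n (fun k => cross_term damped_antideriv j k s))).
  intros j hj. apply (vanishes_at_pinfty_rsum n (fun k => cross_term damped_antideriv j k)).
  intros k hk. apply vanishes_at_pinfty_damped, (cross_exponent_neg j k hj hk).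
Qed.

Lemma sqnorm_eq_cross_sum :
  sqnorm n (fun j => (lr j, li j)) (fun j => (ar j, ai j)) = - cross_sum damped_antideriv 0.
Proof.
  unfold sqnorm, gram, cross_sum. rewrite csum_re, rsum_opp. apply rsum_ext; intros j hj.
  rewrite csum_re, rsum_opp. apply rsum_ext; intros k hk.
  assert (hjk := cross_exponent_neg j k hj hk).
  unfold cross_term, damped_antideriv, damped.
  rewrite Rmult_0_r, exp_0, !Rmult_0_r, cos_0, sin_0.
  unfold Re, Cinv, Cmult, Cconj, Copp, Cplus; simpl.
  assert (0 < (lr j + lr k) * (lr j + lr k)) by nra.
  assert (0 <= (li j - li k) * (li j - li k)) by apply Rle_0_sqr.
  replace (li j + - li k) with (li j - li k) by ring.
  field. lra.
Qed.

Lemma improper_int_sq_expsum :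
  improper_int_0_inf (fun t => expsum_re n ar ai lr li t * expsum_re n ar ai lr li t
                              + expsum_im n ar ai lr li t * expsum_im n ar ai lr li t)
    (sqnorm n (fun j => (lr j, li j)) (fun j => (ar j, ai j))).
Proof.
  rewrite sqnorm_eq_cross_sum.
  replace (fun t => _) with (cross_sum damped)
    by (extensionality t; symmetry; apply sq_expsum_eq).
  apply improper_int_antideriv;
    [apply is_derive_cross_sum | apply continuous_cross_sum | apply vanishes_at_pinfty_cross_sum].
Qed.

End SquaredModulus.

Lemma sqnorm_nonneg_expsum n lr li :
  (forall j, (j < n)%nat -> lr j < 0) -> forall a, 0 <= sqnorm n (fun j => (lr j, li j)) a.
Proof.
  intros Hneg a.
  replace a with (fun j => (fst (a j), snd (a j))) by (extensionality j; destruct (a j); auto).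
  eapply improper_int_nonneg; [|apply improper_int_sq_expsum; auto].
  intros t; simpl. nra.
Qed.

Lemma derivable_pt_lim_expsum_re n ar ai lr li t :
  derivable_pt_lim (expsum_re n ar ai lr li) t
    (expsum_re n (fun j => lr j * ar j - li j * ai j) (fun j => lr j * ai j + li j * ar j) lr li t).
Proof.
  apply is_derive_Reals. unfold expsum_re.
  apply (rsum_is_derive n (fun j s => exp (lr j * s) * (ar j * cos (li j * s) - ai j * sin (li j * s)))
    (fun j s => exp (lr j * s) * ((lr j * ar j - li j * ai j) * cos (li j * s)
                                 - (lr j * ai j + li j * ar j) * sin (li j * s)))).
  intros j hj. auto_derive; [exact I | ring].
Qed.

Lemma derivable_pt_lim_expsum_im n ar ai lr li t :
  derivable_pt_lim (expsum_im n ar ai lr li) t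
    (expsum_im n (fun j => lr j * ar j - li j * ai j) (fun j => lr j * ai j + li j * ar j) lr li t).
Proof.
  apply is_derive_Reals. unfold expsum_im.
  apply (rsum_is_derive n (fun j s => exp (lr j * s) * (ar j * sin (li j * s) + ai j * cos (li j * s)))
    (fun j s => exp (lr j * s) * ((lr j * ar j - li j * ai j) * sin (li j * s)
                                 + (lr j * ai j + li j * ar j) * cos (li j * s)))).
  intros j hj. auto_derive; [exact I | ring].
Qed.

Lemma Cmod_le_half_plus (x y : R) : Cmod (x, y) <= 1/2 + cmod (x + 1/2) y.
Proof.
  replace (x, y) with (((x + 1/2)%R, y) + RtoC (- (1/2)))%C
    by (apply injective_projections; simpl; ring).
  eapply Rle_trans; [apply Cmod_triangle|]. rewrite Cmod_R, Rabs_Ropp, Rabs_right by lra.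
  unfold cmod, Cmod; simpl. rewrite !Rmult_1_r. lra.
Qed.

Lemma sigma_expsum n lr li :
  sigma (fun j => (lr j, li j)) n
  = 4 * rsum n (fun j => lr j * rsum n (fun k => if Nat.ltb j k then lr k else 0)).
Proof.
  rewrite rsum_upper_triangle. unfold sigma, kappa. rewrite rsum_scal.
  apply rsum_ext; intros j hj. simpl. rewrite <- (rsum_scal j (-2)). ring.
Qed.

Lemma sqrt_le_mult_sqrt K x y : 0 <= K -> 0 <= x -> y <= K * K * x -> sqrt y <= K * sqrt x.
Proof.
  intros hK hx hy. rewrite <- (sqrt_square K), <- sqrt_mult by nra.
  apply sqrt_le_1_alt. auto.
Qed.

Theorem theorem11p1 (n : nat) (ar ai lr li : nat -> R) :
  (1 <= n)%nat ->
  (forall j, (j < n)%nat -> lr j < 0) ->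
  forall dr di : R -> R,
  (forall t, derivable_pt_lim (expsum_re n ar ai lr li) t (dr t)) ->
  (forall t, derivable_pt_lim (expsum_im n ar ai lr li) t (di t)) ->
  exists Nf Nd : R,
    L2norm_0_inf (expsum_re n ar ai lr li) (expsum_im n ar ai lr li) Nf /\
    L2norm_0_inf dr di Nd /\
    Nd <= (1/2 + rmax n (fun j => cmod (lr j + 1/2) (li j))
           + 2 * sqrt (rsum n (fun j => lr j *
                 rsum n (fun k => if Nat.ltb j k then lr k else 0)))) * Nf.
Proof.
  intros hn Hneg dr di Hdr Hdi.
  set (lam := fun j => (lr j, li j) : C).
  set (a := fun j => (ar j, ai j) : C).
  set (M := 1/2 + rmax n (fun j => cmod (lr j + 1/2) (li j))).
  set (S := rsum n (fun j => lr j * rsum n (fun k => if Nat.ltb j k then lr k else 0))).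
  assert (Hlam : forall j, (j < n)%nat -> Re (lam j) < 0) by (intros; apply Hneg; auto).
  assert (Hpsd := sqnorm_nonneg_expsum n lr li Hneg).
  assert (Hbound : forall j, (j < n)%nat -> Cmod (lam j) <= M).
  { intros j hj. eapply Rle_trans; [apply Cmod_le_half_plus|].
    unfold M. generalize (rmax_ge n (fun j => cmod (lr j + 1/2) (li j)) j hj). lra. }
  assert (HM : 0 <= M) by (eapply Rle_trans; [apply Cmod_ge_0 | apply (Hbound 0%nat); lia]).
  assert (Hsig : sqrt (sigma lam n) = 2 * sqrt S).
  { assert (0 <= S) by (generalize (sigma_nonneg n lam Hlam n (le_n n)); unfold lam, S;
                        rewrite sigma_expsum; lra).
    unfold lam. rewrite sigma_expsum. fold S. replace 4 with (2 * 2) by ring.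
    rewrite sqrt_mult, sqrt_square by lra. reflexivity. }
  replace dr with (expsum_re n (fun j => lr j * ar j - li j * ai j)
                     (fun j => lr j * ai j + li j * ar j) lr li)
    by (extensionality t; eapply uniqueness_limite; [apply derivable_pt_lim_expsum_re | auto]).
  replace di with (expsum_im n (fun j => lr j * ar j - li j * ai j)
                     (fun j => lr j * ai j + li j * ar j) lr li)
    by (extensionality t; eapply uniqueness_limite; [apply derivable_pt_lim_expsum_im | auto]).
  exists (sqrt (sqnorm n lam a)), (sqrt (sqnorm n lam (dmul lam a))).
  split; [|split].
  - eexists; split; [apply improper_int_sq_expsum; auto | reflexivity].
  - eexists; split; [apply improper_int_sq_expsum; auto | reflexivity].
  - rewrite <- Hsig. apply sqrt_le_mult_sqrt; auto.
    + generalize (sqrt_pos (sigma lam n)). lra.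
    + apply sqnorm_dmul_le; auto.
Qed.
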